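(* Let $\nu>-1$ be real. Then every zero $a\in\mathbb C\setminus\{0\}$ of $x\mapsto J_\nu(x;q^2)$ is real.
   Context: Fix $0<q<1$. For $a\in\mathbb C$ put $(a;q)_0=1$, $(a;q)_k=\prod_{i=0}^{k-1}(1-aq^i)$, $(a;q)_\infty=\prod_{i\ge0}(1-aq^i)$. For $\nu\in\mathbb C$ and $x\in\mathbb C\setminus\{0\}$ the Hahn–Exton $q$-Bessel function is $$J_\nu(x;q^2)=\frac{x^\nu}{(q^2;q^2)_\infty}\sum_{k=0}^\infty\frac{(-1)^kq^{k(k+1)}(q^{2\nu+2k+2};q^2)_\infty}{(q^2;q^2)_k}\,x^{2k},$$ with $x^\nu=\exp(\nu\operatorname{Log}x)$ (principal branch). Thus the zeros of $J_\nu(\cdot;q^2)$ in $\mathbb C\setminus\{0\}$ are the nonzero zeros of the entire function $x^{-\nu}J_\nu(x;q^2)$. *)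

From Stdlib Require Import Reals.
From Coquelicot Require Import Coquelicot.
Open Scope R_scope.

Fixpoint qpoch (a q : R) (k : nat) : R :=
  match k with
  | O => 1
  | S k' => qpoch a q k' * (1 - a * q ^ k')
  end.

Definition qpoch_inf (a q : R) : R := real (Lim_seq (fun k => qpoch a q k)).

Fixpoint Cpown (x : C) (n : nat) : C :=
  match n with
  | O => RtoC 1
  | S n' => Cmult (Cpown x n') x
  end.

(* principal argument in (-pi, pi] *)
Definition Arg (x : C) : R :=
  if Rle_dec 0 (Im x) then acos (Re x / Cmod x) else - acos (Re x / Cmod x).

(* principal power x^nu = exp(nu Log x) for real nu and x <> 0:
   exp(nu (ln|x| + i Arg x)) = |x|^nu (cos(nu Arg x) + i sin(nu Arg x)) *)
Definition cpow_real (x : C) (nu : R) : C :=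
  (exp (nu * ln (Cmod x)) * cos (nu * Arg x),
   exp (nu * ln (Cmod x)) * sin (nu * Arg x)).

Definition CSeries (a : nat -> C) : C :=
  (Series (fun k => Re (a k)), Series (fun k => Im (a k))).

Definition HE_coef (q nu : R) (k : nat) : R :=
  (-1) ^ k * q ^ (k * (k + 1)) * qpoch_inf (Rpower q (2 * nu + 2 * INR k + 2)) (q ^ 2)
  / qpoch (q ^ 2) (q ^ 2) k.

Definition HEJ (q nu : R) (x : C) : C :=
  Cmult (Cmult (cpow_real x nu) (RtoC (/ qpoch_inf (q ^ 2) (q ^ 2))))
        (CSeries (fun k => Cmult (RtoC (HE_coef q nu k)) (Cpown x (2 * k)))).

From Stdlib Require Import Reals Lra Lia.
From Coquelicot Require Import Coquelicot.
Open Scope R_scope.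

(* Write J_nu(x; q^2) = x^nu / (q^2; q^2)_oo * G(x^2), where the entire function
   G(z) = sum_k c_k z^k has real coefficients.  With r = q^2 and b = q^(2nu+2), both
   in (0, 1) because nu > -1, the coefficients obey a three-term recurrence, so that
     r G(z) - (r + b) G(r z) + b G(r^2 z) = - r^2 z G(r z).
   If G(w) = 0, then u_m = G(r^m w) solves a second-order recurrence with u_0 = 0 and
   u_m -> G(0) > 0 geometrically.  Its Wronskian W_N = u_(N+1) conj(u_N) - conj(u_(N+1)) u_N
   satisfies b^(N+1) W_N = (conj w - w) r^(N+1) sum_(n=1..N) b^n |u_n|^2, whereas
   W_N = O(r^N); as b < 1 this forces w to be real.  Finally G > 0 on (-oo, 0] since
   the c_k alternate in sign, so a^2 is a nonnegative real and a is real. *)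

Lemma pow_in_01 (x : R) (n : nat) : 0 <= x <= 1 -> 0 <= x ^ n <= 1.
Proof.
  intros Hx. split; [apply pow_le; lra |].
  rewrite <- (pow1 n). apply pow_incr. lra.
Qed.

(** * q-Pochhammer symbols *)

Section QPochhammer.

Variable r : R.
Hypothesis Hr : 0 <= r <= 1.

Lemma qpoch_S_shift (x : R) (n : nat) :
  qpoch x r (S n) = (1 - x) * qpoch (x * r) r n.
Proof.
  induction n as [|n IH]; [simpl; ring |].
  change (qpoch x r (S (S n))) with (qpoch x r (S n) * (1 - x * r ^ S n)).
  rewrite IH. simpl. ring.
Qed.

Lemma qpoch_in_01 (x : R) (n : nat) : 0 <= x <= 1 -> 0 <= qpoch x r n <= 1.
Proof.
  intros Hx. induction n as [|n IH]; simpl; [lra |].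
  pose proof (pow_in_01 r n Hr).
  assert (0 <= x * r ^ n <= 1) by (split; nra).
  split; nra.
Qed.

Lemma qpoch_ge_pow (x : R) (n : nat) : 0 <= x <= 1 -> (1 - x) ^ n <= qpoch x r n.
Proof.
  intros Hx. induction n as [|n IH]; simpl; [lra |].
  pose proof (pow_in_01 r n Hr).
  assert (0 <= (1 - x) ^ n) by (apply pow_le; lra).
  rewrite Rmult_comm. apply Rmult_le_compat; nra.
Qed.

Lemma qpoch_pos (x : R) (n : nat) : 0 <= x < 1 -> 0 < qpoch x r n.
Proof.
  intros Hx. eapply Rlt_le_trans; [| apply qpoch_ge_pow; lra].
  apply pow_lt. lra.
Qed.

Lemma qpoch_ge_geom_sum (x : R) (n : nat) : 0 <= x <= 1 -> r < 1 ->
  1 - x * (1 - r ^ n) / (1 - r) <= qpoch x r n.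
Proof.
  intros Hx Hr1. induction n as [|n IH]; simpl.
  - replace (1 - 1) with 0 by ring. unfold Rdiv. rewrite Rmult_0_r, Rmult_0_l. lra.
  - pose proof (qpoch_in_01 x n Hx). pose proof (pow_in_01 r n Hr).
    assert (E : 1 - x * (1 - r * r ^ n) / (1 - r)
                = 1 - x * (1 - r ^ n) / (1 - r) - x * r ^ n) by (field; lra).
    rewrite E. set (A := 1 - x * (1 - r ^ n) / (1 - r)) in *.
    assert (0 <= x * r ^ n) by (apply Rmult_le_pos; lra). nra.
Qed.

Lemma is_lim_seq_qpoch (x : R) : 0 <= x <= 1 ->
  is_lim_seq (qpoch x r) (qpoch_inf x r).
Proof.
  intros Hx.
  assert (Hconv : ex_finite_lim_seq (qpoch x r)).
  { apply ex_finite_lim_seq_decr with 0.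
    - intros n. simpl. pose proof (qpoch_in_01 x n Hx). pose proof (pow_in_01 r n Hr).
      assert (0 <= x * r ^ n) by (apply Rmult_le_pos; lra). nra.
    - intros n. apply qpoch_in_01, Hx. }
  destruct Hconv as [l Hl]. unfold qpoch_inf.
  rewrite (is_lim_seq_unique (fun k => qpoch x r k) l Hl). exact Hl.
Qed.

Lemma qpoch_inf_ge (x m : R) : 0 <= x <= 1 ->
  (forall n, m <= qpoch x r n) -> m <= qpoch_inf x r.
Proof.
  intros Hx Hm.
  exact (is_lim_seq_le (fun _ => m) _ m _ Hm (is_lim_seq_const m) (is_lim_seq_qpoch x Hx)).
Qed.

Lemma qpoch_inf_in_01 (x : R) : 0 <= x <= 1 -> 0 <= qpoch_inf x r <= 1.
Proof.
  intros Hx. split.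
  - apply qpoch_inf_ge; [exact Hx |]. intros n. apply qpoch_in_01, Hx.
  - exact (is_lim_seq_le _ (fun _ => 1) _ 1 (fun n => proj2 (qpoch_in_01 x n Hx))
             (is_lim_seq_qpoch x Hx) (is_lim_seq_const 1)).
Qed.

Lemma qpoch_inf_shift (x : R) : 0 <= x <= 1 ->
  qpoch_inf x r = (1 - x) * qpoch_inf (x * r) r.
Proof.
  intros Hx.
  assert (Hxr : 0 <= x * r <= 1) by (split; nra).
  assert (Hlim : is_lim_seq (fun n => qpoch x r (S n)) ((1 - x) * qpoch_inf (x * r) r)).
  { apply is_lim_seq_ext with (fun n => (1 - x) * qpoch (x * r) r n).
    - intros n. symmetry. apply qpoch_S_shift.
    - apply (is_lim_seq_scal_l _ (1 - x) (qpoch_inf (x * r) r)), is_lim_seq_qpoch, Hxr. }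
  pose proof (proj1 (is_lim_seq_incr_1 _ _) (is_lim_seq_qpoch x Hx)) as Hlim'.
  pose proof (is_lim_seq_unique _ _ Hlim) as E. rewrite (is_lim_seq_unique _ _ Hlim') in E.
  injection E. auto.
Qed.

Lemma qpoch_inf_split (x : R) (n : nat) : 0 <= x <= 1 ->
  qpoch_inf x r = qpoch x r n * qpoch_inf (x * r ^ n) r.
Proof.
  revert x. induction n as [|n IH]; intros x Hx.
  - simpl. rewrite Rmult_1_r. ring.
  - assert (Hxr : 0 <= x * r <= 1) by (split; nra).
    rewrite qpoch_S_shift, (qpoch_inf_shift x Hx), (IH (x * r) Hxr). simpl.
    replace (x * r * r ^ n) with (x * (r * r ^ n)) by ring. ring.
Qed.

(* Split off [n] factors so that the tail starts at [x r^n <= (1 - r)/2]; the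
   tail is then at least [1/2] by [qpoch_ge_geom_sum]. *)
Lemma qpoch_inf_pos (x : R) : 0 <= x < 1 -> r < 1 -> 0 < qpoch_inf x r.
Proof.
  intros Hx Hr1.
  destruct (pow_lt_1_zero r ltac:(rewrite Rabs_pos_eq; lra) ((1 - r) / 2) ltac:(lra))
    as [n Hn].
  specialize (Hn n (le_n n)). rewrite Rabs_pos_eq in Hn by (apply pow_le; lra).
  pose proof (pow_in_01 r n Hr).
  assert (Htail : 0 <= x * r ^ n <= 1) by (split; nra).
  rewrite (qpoch_inf_split x n) by lra.
  apply Rmult_lt_0_compat; [apply qpoch_pos; lra |].
  apply Rlt_le_trans with (1 / 2); [lra |].
  apply qpoch_inf_ge; [exact Htail |]. intros m.
  eapply Rle_trans; [| apply qpoch_ge_geom_sum; lra].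
  pose proof (pow_in_01 r m Hr).
  assert (x * r ^ n * (1 - r ^ m) <= (1 - r) / 2) by nra.
  assert (x * r ^ n * (1 - r ^ m) / (1 - r) <= 1 / 2).
  { apply Rmult_le_reg_r with (1 - r); [lra |].
    unfold Rdiv. rewrite Rmult_assoc, Rinv_l by lra. lra. }
  lra.
Qed.

End QPochhammer.

(** * The Hahn-Exton coefficients *)

Lemma pow_pronic_S (q : R) (k : nat) : q ^ (S k * (S k + 1)) = q ^ (k * (k + 1)) * (q ^ 2) ^ S k.
Proof. rewrite <- pow_mult, <- pow_add. f_equal. nia. Qed.

Lemma ex_series_pow_pronic (q M : R) : 0 < q < 1 -> 0 < M ->
  ex_series (fun k => q ^ (k * (k + 1)) * M ^ k).
Proof.
  intros Hq HM.
  assert (Hpos : forall k, 0 < q ^ (k * (k + 1)) * M ^ k).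
  { intros k. apply Rmult_lt_0_compat; apply pow_lt; lra. }
  apply ex_series_ext with (fun k => Rabs (q ^ (k * (k + 1)) * M ^ k)).
  { intros k. apply Rabs_pos_eq, Rlt_le, Hpos. }
  apply ex_series_DAlembert with 0; [lra | intros n; specialize (Hpos n); lra |].
  apply is_lim_seq_ext with (fun n => M * (q ^ 2) ^ S n).
  { intros n. specialize (Hpos n). rewrite pow_pronic_S, Rabs_pos_eq.
    - simpl (M ^ S n). field. split; apply pow_nonzero; lra.
    - apply Rlt_le. unfold Rdiv. apply Rmult_lt_0_compat; [| apply Rinv_0_lt_compat];
        (rewrite <- pow_pronic_S; apply Rmult_lt_0_compat; apply pow_lt; lra) || lra. }
  replace (Finite 0) with (Rbar_mult M 0) by (simpl; f_equal; ring).
  apply is_lim_seq_scal_l, (is_lim_seq_incr_1 (fun n => (q ^ 2) ^ n)), is_lim_seq_geom.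
  rewrite Rabs_pos_eq; simpl; nra.
Qed.

Section HahnExtonCoefficients.

Variables q nu : R.
Hypotheses (Hq : 0 < q < 1) (Hnu : -1 < nu).

Local Notation r := (q ^ 2).
Local Notation b := (Rpower q (2 * nu + 2)).
Local Notation c := (HE_coef q nu).

Lemma HE_r_in_01 : 0 < r < 1.
Proof. simpl. split; nra. Qed.

Lemma HE_b_in_01 : 0 < b < 1.
Proof.
  unfold Rpower. split; [apply exp_pos |].
  rewrite <- exp_0. apply exp_increasing.
  assert (ln q < 0) by (rewrite <- ln_1; apply ln_increasing; lra).
  nra.
Qed.

Lemma HE_tail_bounds (k : nat) : 0 < qpoch_inf (b * r ^ k) r <= 1.
Proof.
  pose proof HE_r_in_01. pose proof HE_b_in_01. pose proof (pow_in_01 r k ltac:(lra)).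
  split.
  - apply qpoch_inf_pos; (try split); nra.
  - apply qpoch_inf_in_01; split; nra.
Qed.

Lemma HE_coef_eq (k : nat) :
  c k = (-1) ^ k * q ^ (k * (k + 1)) * qpoch_inf (b * r ^ k) r / qpoch r r k.
Proof.
  unfold HE_coef. do 3 f_equal.
  replace (2 * nu + 2 * INR k + 2) with ((2 * nu + 2) + INR (2 * k))
    by (rewrite mult_INR; simpl; ring).
  rewrite Rpower_plus, Rpower_pow, pow_mult by lra. reflexivity.
Qed.

Lemma HE_coef_rec (k : nat) :
  c (S k) * ((1 - r ^ S k) * (1 - b * r ^ k)) = - r ^ S k * c k.
Proof.
  pose proof HE_r_in_01. pose proof HE_b_in_01. pose proof (pow_in_01 r k ltac:(lra)).
  rewrite !HE_coef_eq, pow_pronic_S.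
  rewrite (qpoch_inf_shift r ltac:(lra) (b * r ^ k)) by (split; nra).
  change (qpoch r r (S k)) with (qpoch r r k * (1 - r * r ^ k)).
  replace (b * r ^ k * r) with (b * r ^ S k) by (simpl; ring).
  pose proof (qpoch_pos r ltac:(lra) r k ltac:(lra)).
  assert (1 - r * r ^ k <> 0) by nra.
  change (r ^ S k) with (r * r ^ k). change ((-1) ^ S k) with (-1 * (-1) ^ k).
  field. lra.
Qed.

Lemma HE_coef_0_pos : 0 < c 0.
Proof.
  rewrite HE_coef_eq. pose proof (HE_tail_bounds 0). simpl in *.
  unfold Rdiv. rewrite Rinv_1. lra.
Qed.

Lemma HE_coef_alt_sign (k : nat) : 0 <= (-1) ^ k * c k.
Proof.
  pose proof HE_r_in_01. pose proof (HE_tail_bounds k).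
  pose proof (qpoch_pos r ltac:(lra) r k ltac:(lra)).
  assert (0 <= q ^ (k * (k + 1))) by (apply pow_le; lra).
  rewrite HE_coef_eq. unfold Rdiv.
  replace ((-1) ^ k * ((-1) ^ k * q ^ (k * (k + 1)) * qpoch_inf (b * r ^ k) r * / qpoch r r k))
    with (((-1) ^ 2) ^ k * (q ^ (k * (k + 1)) * qpoch_inf (b * r ^ k) r * / qpoch r r k))
    by (rewrite <- pow_mult, Nat.mul_comm, pow_mult; simpl; ring).
  replace ((-1) ^ 2) with 1 by ring. rewrite pow1, Rmult_1_l.
  apply Rmult_le_pos; [nra |]. apply Rlt_le, Rinv_0_lt_compat. lra.
Qed.

Lemma HE_coef_abs_le (k : nat) : Rabs (c k) <= q ^ (k * (k + 1)) * (/ (1 - r)) ^ k.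
Proof.
  pose proof HE_r_in_01. pose proof (HE_tail_bounds k).
  pose proof (qpoch_ge_pow r ltac:(lra) r k ltac:(lra)).
  assert (0 < (1 - r) ^ k) by (apply pow_lt; lra).
  assert (0 <= q ^ (k * (k + 1))) by (apply pow_le; lra).
  rewrite HE_coef_eq. unfold Rdiv.
  rewrite !Rabs_mult, Rabs_inv, pow_1_abs, Rmult_1_l, (Rabs_pos_eq (q ^ _)),
    (Rabs_pos_eq (qpoch_inf _ _)), (Rabs_pos_eq (qpoch _ _ _)), pow_inv by lra.
  rewrite Rmult_assoc. apply Rmult_le_compat_l; [lra |].
  apply Rle_trans with (/ qpoch r r k).
  - rewrite <- (Rmult_1_l (/ qpoch r r k)) at 2.
    apply Rmult_le_compat_r; [apply Rlt_le, Rinv_0_lt_compat |]; lra.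
  - apply Rinv_le_contravar; lra.
Qed.

Lemma HE_coef_entire (rho : R) : 0 <= rho -> ex_series (fun k => Rabs (c k) * rho ^ k).
Proof.
  intros Hrho. pose proof HE_r_in_01.
  set (M := rho / (1 - r) + 1).
  assert (HM : 0 < M) by (unfold M; assert (0 <= rho / (1 - r)) by
    (apply Rmult_le_pos; [| apply Rlt_le, Rinv_0_lt_compat]; lra); lra).
  apply (ex_series_le (fun k => Rabs (c k) * rho ^ k) (fun k => q ^ (k * (k + 1)) * M ^ k));
    [| apply ex_series_pow_pronic; lra].
  intros k. rewrite Rabs_pos_eq by (apply Rmult_le_pos; [apply Rabs_pos | apply pow_le; lra]).
  eapply Rle_trans; [apply Rmult_le_compat_r; [apply pow_le; lra | apply HE_coef_abs_le] |].
  rewrite Rmult_assoc, <- Rpow_mult_distr. apply Rmult_le_compat_l; [apply pow_le; lra |].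
  apply pow_incr. split.
  - apply Rmult_le_pos; [apply Rlt_le, Rinv_0_lt_compat |]; lra.
  - unfold M, Rdiv. lra.
Qed.

End HahnExtonCoefficients.

(** * Absolutely summable complex series *)

Definition Cabs_summable (a : nat -> C) : Prop := ex_series (fun k => Cmod (a k)).

Lemma Cabs_summable_le (a : nat -> C) (m : nat -> R) :
  (forall k, Cmod (a k) <= m k) -> ex_series m -> Cabs_summable a.
Proof.
  intros Hm Hex. apply (ex_series_le (fun k => Cmod (a k)) m); [| exact Hex].
  intros k. rewrite Rabs_pos_eq by apply Cmod_ge_0. apply Hm.
Qed.

Lemma im_le_Cmod (z : C) : Rabs (Im z) <= Cmod z.
Proof.
  destruct z as [x y]. unfold Cmod. simpl. rewrite <- sqrt_Rsqr_abs.
  apply sqrt_le_1_alt. unfold Rsqr. nra.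
Qed.

Lemma ex_series_abs_Re (a : nat -> C) : Cabs_summable a -> ex_series (fun k => Rabs (Re (a k))).
Proof.
  intros Ha. apply (ex_series_le (fun k => Rabs (Re (a k))) (fun k => Cmod (a k))); [| exact Ha].
  intros k. rewrite Rabs_Rabsolu. apply re_le_Cmod.
Qed.

Lemma ex_series_abs_Im (a : nat -> C) : Cabs_summable a -> ex_series (fun k => Rabs (Im (a k))).
Proof.
  intros Ha. apply (ex_series_le (fun k => Rabs (Im (a k))) (fun k => Cmod (a k))); [| exact Ha].
  intros k. rewrite Rabs_Rabsolu. apply im_le_Cmod.
Qed.

Lemma Cabs_summable_plus (a a' : nat -> C) :
  Cabs_summable a -> Cabs_summable a' -> Cabs_summable (fun k => (a k + a' k)%C).
Proof.
  intros Ha Ha'. apply Cabs_summable_le with (fun k => Cmod (a k) + Cmod (a' k)).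
  - intros k. apply Cmod_triangle.
  - apply (ex_series_plus (fun k => Cmod (a k)) (fun k => Cmod (a' k))); assumption.
Qed.

Lemma Cabs_summable_scal (z : C) (a : nat -> C) :
  Cabs_summable a -> Cabs_summable (fun k => (z * a k)%C).
Proof.
  intros Ha. apply Cabs_summable_le with (fun k => Cmod z * Cmod (a k)).
  - intros k. rewrite Cmod_mult. lra.
  - apply (ex_series_scal_l (Cmod z) (fun k => Cmod (a k))), Ha.
Qed.

Lemma CSeries_ext (a a' : nat -> C) : (forall k, a k = a' k) -> CSeries a = CSeries a'.
Proof. intros H. unfold CSeries. f_equal; apply Series_ext; intros k; rewrite H; reflexivity. Qed.

Lemma CSeries_plus (a a' : nat -> C) : Cabs_summable a -> Cabs_summable a' ->
  CSeries (fun k => (a k + a' k)%C) = (CSeries a + CSeries a')%C.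
Proof.
  intros Ha Ha'. unfold CSeries.
  change (Series (fun k => Re (a k + a' k)%C)) with (Series (fun k => Re (a k) + Re (a' k))).
  change (Series (fun k => Im (a k + a' k)%C)) with (Series (fun k => Im (a k) + Im (a' k))).
  rewrite (Series_plus (fun k => Re (a k)) (fun k => Re (a' k))),
    (Series_plus (fun k => Im (a k)) (fun k => Im (a' k)))
    by (apply ex_series_Rabs; (apply ex_series_abs_Re || apply ex_series_abs_Im); assumption).
  reflexivity.
Qed.

Lemma CSeries_scal (z : C) (a : nat -> C) : Cabs_summable a ->
  CSeries (fun k => (z * a k)%C) = (z * CSeries a)%C.
Proof.
  intros Ha.
  pose proof (ex_series_Rabs _ (ex_series_abs_Re a Ha)) as HRe.
  pose proof (ex_series_Rabs _ (ex_series_abs_Im a Ha)) as HIm.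
  destruct z as [x y]. unfold CSeries, Cmult. simpl. f_equal.
  - rewrite (Series_minus (fun k => x * fst (a k)) (fun k => y * snd (a k)))
      by (apply (ex_series_scal_l x (fun k => fst (a k)) HRe)
          || apply (ex_series_scal_l y (fun k => snd (a k)) HIm)).
    rewrite !Series_scal_l. reflexivity.
  - rewrite (Series_plus (fun k => x * snd (a k)) (fun k => y * fst (a k)))
      by (apply (ex_series_scal_l x (fun k => snd (a k)) HIm)
          || apply (ex_series_scal_l y (fun k => fst (a k)) HRe)).
    rewrite !Series_scal_l. reflexivity.
Qed.

Lemma CSeries_incr_1 (a : nat -> C) : Cabs_summable a ->
  CSeries a = (a 0%nat + CSeries (fun k => a (S k)))%C.
Proof.
  intros Ha. unfold CSeries.
  rewrite (Series_incr_1 (fun k => Re (a k))), (Series_incr_1 (fun k => Im (a k)))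
    by (apply ex_series_Rabs; (apply ex_series_abs_Re || apply ex_series_abs_Im); assumption).
  destruct (a 0%nat). reflexivity.
Qed.

Lemma CSeries_Cmod_le (a : nat -> C) : Cabs_summable a ->
  Cmod (CSeries a) <= 2 * Series (fun k => Cmod (a k)).
Proof.
  intros Ha.
  assert (HRe : Rabs (Series (fun k => Re (a k))) <= Series (fun k => Cmod (a k))).
  { eapply Rle_trans; [apply Series_Rabs, ex_series_abs_Re, Ha |].
    apply Series_le; [| exact Ha]. intros k. split; [apply Rabs_pos | apply re_le_Cmod]. }
  assert (HIm : Rabs (Series (fun k => Im (a k))) <= Series (fun k => Cmod (a k))).
  { eapply Rle_trans; [apply Series_Rabs, ex_series_abs_Im, Ha |].
    apply Series_le; [| exact Ha]. intros k. split; [apply Rabs_pos | apply im_le_Cmod]. }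
  unfold CSeries. set (x := Series (fun k => Re (a k))) in *.
  set (y := Series (fun k => Im (a k))) in *.
  apply Rle_trans with (Rabs x + Rabs y); [| lra].
  pose proof (Rabs_pos x). pose proof (Rabs_pos y).
  unfold Cmod. simpl. rewrite <- (sqrt_square (Rabs x + Rabs y)) by lra.
  apply sqrt_le_1_alt.
  assert (Rabs x * Rabs x = x * x) by (rewrite <- Rabs_mult; apply Rabs_pos_eq; nra).
  assert (Rabs y * Rabs y = y * y) by (rewrite <- Rabs_mult; apply Rabs_pos_eq; nra).
  nra.
Qed.

(** * Power series with real coefficients *)

Lemma Series_ge_0th (a : nat -> R) : ex_series a -> (forall k, 0 <= a k) -> a 0%nat <= Series a.
Proof.
  intros Ha Hpos. rewrite Series_incr_1 by exact Ha.
  assert (Hzero : Series (fun _ => 0) = 0).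
  { rewrite (Series_ext _ (fun k => 0 * a k)) by (intros; ring).
    rewrite Series_scal_l. ring. }
  assert (0 <= Series (fun k => a (S k))).
  { rewrite <- Hzero. apply Series_le; [intros k; split; [lra | apply Hpos] |].
    apply (ex_series_incr_1 a), Ha. }
  lra.
Qed.

Lemma Cpown_Cmod (z : C) (k : nat) : Cmod (Cpown z k) = Cmod z ^ k.
Proof.
  induction k as [|k IH]; simpl.
  - rewrite Cmod_R, Rabs_R1. reflexivity.
  - rewrite Cmod_mult, IH. ring.
Qed.

Lemma Cpown_scal (s : R) (z : C) (k : nat) : Cpown (s * z) k = (RtoC (s ^ k) * Cpown z k)%C.
Proof.
  induction k as [|k IH]; simpl.
  - rewrite Cmult_1_l. reflexivity.
  - rewrite IH, RtoC_mult. ring.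
Qed.

Lemma Cpown_RtoC (x : R) (k : nat) : Cpown x k = RtoC (x ^ k).
Proof.
  induction k as [|k IH]; [reflexivity |].
  simpl. rewrite IH, <- RtoC_mult. f_equal. ring.
Qed.

Lemma Cpown_double (z : C) (k : nat) : Cpown z (2 * k) = Cpown (z * z) k.
Proof.
  induction k as [|k IH]; [reflexivity |].
  replace (2 * S k)%nat with (S (S (2 * k))) by lia.
  change (Cpown z (S (S (2 * k)))) with (Cpown z (2 * k) * z * z)%C.
  rewrite IH. simpl. ring.
Qed.

Definition CPSeries (c : nat -> R) (z : C) : C := CSeries (fun k => (c k * Cpown z k)%C).

Section RealPowerSeries.

Variable c : nat -> R.
Hypothesis Hc : forall rho, 0 <= rho -> ex_series (fun k => Rabs (c k) * rho ^ k).

Lemma CPSeries_summable (z : C) : Cabs_summable (fun k => (c k * Cpown z k)%C).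
Proof.
  apply Cabs_summable_le with (fun k => Rabs (c k) * Cmod z ^ k).
  - intros k. rewrite Cmod_mult, Cmod_R, Cpown_Cmod. lra.
  - apply Hc, Cmod_ge_0.
Qed.

Lemma CPSeries_Lipschitz_0 (rho : R) : 0 <= rho -> exists K,
  forall z, Cmod z <= rho -> Cmod (CPSeries c z - c 0%nat) <= K * Cmod z.
Proof.
  intros Hrho.
  set (m := fun k => Rabs (c (S k)) * (rho + 1) ^ S k).
  assert (Hm : ex_series m) by exact (proj1 (ex_series_incr_1 _) (Hc (rho + 1) ltac:(lra))).
  exists (2 * Series m). intros z Hz. pose proof (Cmod_ge_0 z) as Hz0.
  unfold CPSeries. rewrite CSeries_incr_1 by apply CPSeries_summable.
  replace (c 0%nat * Cpown z 0 + CSeries (fun k => c (S k) * Cpown z (S k)) - c 0%nat)%C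
    with (CSeries (fun k => c (S k) * Cpown z (S k)))%C by (simpl; ring).
  eapply Rle_trans;
    [apply CSeries_Cmod_le, (proj1 (ex_series_incr_1 _) (CPSeries_summable z)) |].
  rewrite Rmult_assoc. apply Rmult_le_compat_l; [lra |].
  rewrite <- Series_scal_r. apply Series_le.
  - intros k. split; [apply Cmod_ge_0 |].
    rewrite Cmod_mult, Cmod_R, Cpown_Cmod. unfold m. simpl.
    assert (Hpow : Cmod z ^ k <= (rho + 1) ^ k) by (apply pow_incr; lra).
    pose proof (pow_le (Cmod z) k Hz0).
    rewrite Rmult_assoc. apply Rmult_le_compat_l; [apply Rabs_pos |].
    assert (0 <= (rho + 1) ^ k * Cmod z) by nra. nra.
  - apply (ex_series_scal_r (Cmod z) m), Hm.
Qed.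

Lemma CPSeries_q_difference (r b : R) (z : C) :
  (forall k, c (S k) * ((1 - r ^ S k) * (1 - b * r ^ k)) = - r ^ S k * c k) ->
  (r * CPSeries c z - (r + b) * CPSeries c (r * z) + b * CPSeries c (r * r * z)
   = - (r * r * z) * CPSeries c (r * z))%C.
Proof.
  intros Hrec.
  set (d := fun k => c k * (r - (r + b) * r ^ k + b * (r * r) ^ k)).
  assert (Hd0 : d 0%nat = 0) by (unfold d; simpl; ring).
  assert (HdS : forall k, d (S k) = - (r * r) * (r ^ k * c k)).
  { intros k. unfold d. rewrite Rpow_mult_distr.
    replace (r - (r + b) * r ^ S k + b * (r ^ S k * r ^ S k))
      with (r * ((1 - r ^ S k) * (1 - b * r ^ k))) by (simpl; ring).
    rewrite Rmult_comm, Rmult_assoc, (Rmult_comm _ (c (S k))), Hrec. simpl. ring. }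
  set (t := fun k => (r * (c k * Cpown z k) + - (r + b) * (c k * Cpown (r * z) k)
                      + b * (c k * Cpown (r * r * z) k))%C).
  assert (Ht : Cabs_summable t).
  { repeat (apply Cabs_summable_plus || apply Cabs_summable_scal || apply CPSeries_summable). }
  assert (Hterm : forall k, t k = (d k * Cpown z k)%C).
  { intros k. unfold t, d. rewrite <- (RtoC_mult r r), !Cpown_scal, Rpow_mult_distr.
    rewrite !RtoC_mult, RtoC_plus, RtoC_minus, !RtoC_mult, RtoC_plus. ring. }
  replace (r * CPSeries c z - (r + b) * CPSeries c (r * z) + b * CPSeries c (r * r * z))%C
    with (CSeries t).
  2: { unfold t, CPSeries.
       rewrite !CSeries_plus, !CSeries_scal
         by repeat (apply Cabs_summable_plus || apply Cabs_summable_scal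
                    || apply CPSeries_summable).
       ring. }
  rewrite (CSeries_incr_1 t Ht), Hterm, Hd0, Cmult_0_l, Cplus_0_l.
  unfold CPSeries. rewrite <- CSeries_scal by apply CPSeries_summable.
  apply CSeries_ext. intros k.
  rewrite Hterm, HdS, Cpown_scal. simpl Cpown. rewrite !RtoC_mult, RtoC_opp, !RtoC_mult. ring.
Qed.

Lemma CPSeries_Re_pos_neg (t : R) : 0 < c 0%nat -> (forall k, 0 <= (-1) ^ k * c k) ->
  0 <= t -> 0 < Re (CPSeries c (RtoC (- t))).
Proof.
  intros Hc0 Hsign Ht. unfold CPSeries, CSeries. simpl fst.
  assert (Hterm : forall k, Re (c k * Cpown (RtoC (- t)) k)%C = (-1) ^ k * c k * t ^ k).
  { intros k. rewrite Cpown_RtoC, <- RtoC_mult. simpl.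
    replace (- t) with (-1 * t) by ring. rewrite Rpow_mult_distr. ring. }
  rewrite (Series_ext _ _ Hterm).
  eapply Rlt_le_trans; [| apply Series_ge_0th].
  - simpl. lra.
  - apply (ex_series_ext (fun k => Re (c k * Cpown (RtoC (- t)) k)%C)); [exact Hterm |].
    apply ex_series_Rabs, ex_series_abs_Re, CPSeries_summable.
  - intros k. apply Rmult_le_pos; [apply Hsign | apply pow_le, Ht].
Qed.

End RealPowerSeries.

(** * A Wronskian argument for a second-order recurrence *)

Lemma Cconj_RtoC (x : R) : Cconj (RtoC x) = RtoC x.
Proof. unfold Cconj, RtoC. simpl. f_equal. ring. Qed.

Lemma Ceq_linear_combination (L R a1 b1 a2 b2 c1 c2 : C) : a1 = b1 -> a2 = b2 ->
  (L - R = c1 * (a1 - b1) + c2 * (a2 - b2))%C -> L = R.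
Proof.
  intros -> -> E. replace L with (R + (L - R))%C by ring. rewrite E. ring.
Qed.

Lemma Cmod_minus_le (x y : C) : Cmod (x - y) <= Cmod x + Cmod y.
Proof. unfold Cminus. rewrite <- (Cmod_opp y). apply Cmod_triangle. Qed.

Lemma le_0_of_le_geom (x A s : R) (n0 : nat) : 0 <= s < 1 ->
  (forall N, (n0 <= N)%nat -> x <= A * s ^ N) -> x <= 0.
Proof.
  intros Hs Hx. destruct (Rle_or_lt x 0) as [Hle | Hpos]; [exact Hle | exfalso].
  assert (Heps : 0 < x / (Rabs A + 1))
    by (apply Rmult_lt_0_compat; [| apply Rinv_0_lt_compat; pose proof (Rabs_pos A)]; lra).
  destruct (pow_lt_1_zero s ltac:(rewrite Rabs_pos_eq; lra) _ Heps) as [N1 HN1].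
  set (N := Nat.max n0 N1).
  specialize (Hx N (Nat.le_max_l _ _)). specialize (HN1 N (Nat.le_max_r _ _)).
  rewrite Rabs_pos_eq in HN1 by (apply pow_le; lra).
  pose proof (Rabs_pos A). pose proof (Rle_abs A). pose proof (pow_le s N ltac:(lra)).
  assert (x / (Rabs A + 1) * (Rabs A + 1) = x) by (field; lra).
  nra.
Qed.

Definition wronskian (u : nat -> C) (N : nat) : C :=
  (u (S N) * Cconj (u N) - Cconj (u (S N)) * u N)%C.

Fixpoint weighted_energy (b : R) (u : nat -> C) (N : nat) : R :=
  match N with
  | O => 0
  | S N' => weighted_energy b u N' + b ^ S N' * Cmod (u (S N')) ^ 2
  end.

Lemma wronskian_Cmod_le (u : nat -> C) (N : nat) :
  Cmod (wronskian u N) <= 2 * Cmod (u (S N) - u N) * Cmod (u N).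
Proof.
  assert (E : wronskian u N = ((u (S N) - u N) * Cconj (u N)
                               - Cconj (u (S N) - u N) * u N)%C)
    by (unfold wronskian; rewrite Cminus_conj; ring).
  rewrite E. eapply Rle_trans; [apply Cmod_minus_le |].
  rewrite !Cmod_mult, !Cmod_conj. lra.
Qed.

Section SecondOrderRecurrence.

Variables (r b : R) (w : C) (u : nat -> C).
Hypotheses (Hr : 0 < r < 1) (Hb : 0 < b < 1).
Hypothesis Hu0 : u 0%nat = 0.
Hypothesis Hrec : forall m,
  (r * u m - (r + b) * u (S m) + b * u (S (S m)) = - (RtoC (r ^ S (S m)) * w) * u (S m))%C.

Lemma wronskian_step (N : nat) :
  (b * wronskian u (S N) - r * wronskian u N
   = (Cconj w - w) * RtoC (r ^ S (S N)) * RtoC (Cmod (u (S N)) ^ 2))%C.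
Proof.
  pose proof (f_equal Cconj (Hrec N)) as Hconj.
  rewrite Cplus_conj, !Cminus_conj, !Cmult_conj, Copp_conj, Cmult_conj, Cplus_conj,
    !Cconj_RtoC in Hconj.
  unfold wronskian. rewrite Cmod2_conj.
  apply (Ceq_linear_combination _ _ _ _ _ _ (Cconj (u (S N))) (- u (S N))%C (Hrec N) Hconj).
  ring.
Qed.

Lemma wronskian_energy (N : nat) :
  (RtoC (b ^ S N) * wronskian u N
   = (Cconj w - w) * RtoC (r ^ S N) * RtoC (weighted_energy b u N))%C.
Proof.
  induction N as [|N IH].
  - unfold wronskian. rewrite Hu0, Cconj_RtoC. simpl weighted_energy. ring.
  - pose proof (wronskian_step N) as Hstep.
    cbn [weighted_energy]. rewrite RtoC_plus, RtoC_mult.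
    replace (r ^ S (S N)) with (r * r ^ S N) in * by (simpl; ring).
    replace (b ^ S (S N)) with (b * b ^ S N) by (simpl; ring).
    rewrite !RtoC_mult in *.
    apply (Ceq_linear_combination _ _ _ _ _ _ (RtoC (b ^ S N)) (RtoC r) Hstep IH).
    ring.
Qed.

Lemma weighted_energy_mono (N M : nat) : (N <= M)%nat ->
  weighted_energy b u N <= weighted_energy b u M.
Proof.
  intros HNM. induction HNM as [| M _ IH]; [lra |].
  cbn [weighted_energy].
  assert (0 <= b ^ S M * Cmod (u (S M)) ^ 2)
    by (apply Rmult_le_pos; [apply pow_le; lra | apply pow2_ge_0]).
  lra.
Qed.

Lemma weighted_energy_pos (n : nat) : u (S n) <> 0%C -> 0 < weighted_energy b u (S n).
Proof.
  intros Hn. cbn [weighted_energy].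
  assert (0 <= weighted_energy b u n) by exact (weighted_energy_mono 0 n (Nat.le_0_l n)).
  assert (0 < b ^ S n * Cmod (u (S n)) ^ 2).
  { apply Rmult_lt_0_compat; [apply pow_lt; lra |].
    apply pow_lt. apply Cmod_gt_0, Hn. }
  lra.
Qed.

Variables (g : C) (K : R).
Hypothesis Hg : g <> 0%C.
Hypothesis Hconv : forall n, Cmod (u n - g) <= K * r ^ n.

Lemma limit_Cmod_le : Cmod g <= K.
Proof.
  pose proof (Hconv 0%nat) as H0. rewrite Hu0 in H0.
  replace (0 - g)%C with (- g)%C in H0 by ring. rewrite Cmod_opp in H0. simpl in H0. lra.
Qed.

Lemma wronskian_Cmod_le_geom (N : nat) :
  Cmod (wronskian u N) <= 4 * K * (Cmod g + K) * r ^ N.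
Proof.
  pose proof (pow_in_01 r N ltac:(lra)).
  pose proof limit_Cmod_le as HK. pose proof (Cmod_ge_0 g).
  assert (Hu : Cmod (u N) <= Cmod g + K).
  { replace (u N) with (g + (u N - g))%C by ring.
    eapply Rle_trans; [apply Cmod_triangle |]. specialize (Hconv N). nra. }
  assert (Hdiff : Cmod (u (S N) - u N) <= 2 * K * r ^ N).
  { replace (u (S N) - u N)%C with ((u (S N) - g) - (u N - g))%C by ring.
    eapply Rle_trans; [apply Cmod_minus_le |].
    assert (K * r ^ S N <= K * r ^ N).
    { apply Rmult_le_compat_l; [lra |]. simpl. pose proof (pow_le r N). nra. }
    pose proof (Hconv N). pose proof (Hconv (S N)). lra. }
  eapply Rle_trans; [apply wronskian_Cmod_le |].
  replace (4 * K * (Cmod g + K) * r ^ N) with (2 * (2 * K * r ^ N) * (Cmod g + K)) by ring.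
  pose proof (Cmod_ge_0 (u (S N) - u N)).
  apply Rmult_le_compat; [lra | apply Cmod_ge_0 | lra | exact Hu].
Qed.

Lemma exists_nonzero_term : exists n, u (S n) <> 0%C.
Proof.
  assert (Hgpos : 0 < Cmod g) by (apply Cmod_gt_0, Hg).
  assert (HK : 0 < K) by (pose proof limit_Cmod_le; lra).
  destruct (pow_lt_1_zero r ltac:(rewrite Rabs_pos_eq; lra) (Cmod g / K)
              ltac:(apply Rmult_lt_0_compat; [| apply Rinv_0_lt_compat]; lra)) as [n Hn].
  exists n. intros Hz. specialize (Hn (S n) (Nat.le_succ_diag_r n)).
  rewrite Rabs_pos_eq in Hn by (apply pow_le; lra).
  specialize (Hconv (S n)). rewrite Hz in Hconv.
  replace (0 - g)%C with (- g)%C in Hconv by ring. rewrite Cmod_opp in Hconv.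
  assert (K * r ^ S n < Cmod g).
  { apply Rmult_lt_reg_r with (/ K); [apply Rinv_0_lt_compat; lra |].
    rewrite Rmult_comm, <- Rmult_assoc, Rinv_l, Rmult_1_l by lra. exact Hn. }
  lra.
Qed.

Lemma energy_le_geom (n N : nat) : (n <= N)%nat ->
  Cmod (Cconj w - w) * r * weighted_energy b u n <= 4 * K * (Cmod g + K) * b ^ S N.
Proof.
  intros HN. set (A := 4 * K * (Cmod g + K)).
  pose proof (f_equal Cmod (wronskian_energy N)) as HWE.
  assert (HE0 : 0 <= weighted_energy b u N) by exact (weighted_energy_mono 0 N (Nat.le_0_l N)).
  rewrite !Cmod_mult, !Cmod_R, (Rabs_pos_eq (weighted_energy b u N) HE0),
    !Rabs_pos_eq in HWE by (apply pow_le; lra).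
  pose proof (weighted_energy_mono _ _ HN) as HEN.
  pose proof (wronskian_Cmod_le_geom N) as HW. fold A in HW.
  pose proof (Cmod_ge_0 (Cconj w - w)).
  assert (HrN : 0 < r ^ N) by (apply pow_lt; lra).
  apply Rmult_le_reg_r with (r ^ N); [exact HrN |].
  replace (r ^ S N) with (r * r ^ N) in HWE by reflexivity.
  replace (b ^ S N) with (b * b ^ N) in HWE |- * by reflexivity.
  assert (H1 : Cmod (Cconj w - w) * r * weighted_energy b u n * r ^ N
               <= Cmod (Cconj w - w) * (r * r ^ N) * weighted_energy b u N).
  { replace (Cmod (Cconj w - w) * r * weighted_energy b u n * r ^ N)
      with (Cmod (Cconj w - w) * (r * r ^ N) * weighted_energy b u n) by ring.
    apply Rmult_le_compat_l; [| exact HEN]. apply Rmult_le_pos; nra. }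
  assert (H2 : b * b ^ N * Cmod (wronskian u N) <= b * b ^ N * (A * r ^ N)).
  { apply Rmult_le_compat_l; [| exact HW]. pose proof (pow_le b N). nra. }
  lra.
Qed.

Theorem recurrence_parameter_real : Im w = 0.
Proof.
  destruct exists_nonzero_term as [n Hn].
  pose proof (weighted_energy_pos n Hn) as HE.
  assert (Hle : Cmod (Cconj w - w) * r * weighted_energy b u (S n) <= 0).
  { apply (le_0_of_le_geom _ (4 * K * (Cmod g + K) * b) b (S n)); [lra |].
    intros N HN. replace (4 * K * (Cmod g + K) * b * b ^ N)
      with (4 * K * (Cmod g + K) * b ^ S N) by (simpl; ring).
    apply energy_le_geom, HN. }
  assert (Hw : Cmod (Cconj w - w) = 0).
  { pose proof (Cmod_ge_0 (Cconj w - w)).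
    assert (0 < r * weighted_energy b u (S n)) by nra. nra. }
  apply Cmod_eq_0 in Hw. destruct w as [x y].
  unfold Cconj, Cminus, Cplus, Copp in Hw. simpl in Hw. injection Hw. simpl. lra.
Qed.

End SecondOrderRecurrence.

(** * Zeros of the Hahn-Exton function *)

Section HahnExtonZeros.

Variables q nu : R.
Hypotheses (Hq : 0 < q < 1) (Hnu : -1 < nu).

Local Notation r := (q ^ 2).
Local Notation b := (Rpower q (2 * nu + 2)).
Local Notation G := (CPSeries (HE_coef q nu)).

Lemma HE_series_zero_real (w : C) : G w = 0%C -> Im w = 0.
Proof.
  intros Hw. pose proof (HE_r_in_01 q Hq) as Hr.
  set (u := fun m => G (RtoC (r ^ m) * w)%C).
  destruct (CPSeries_Lipschitz_0 _ (HE_coef_entire q nu Hq Hnu) (Cmod w) (Cmod_ge_0 w))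
    as [L HL].
  apply (recurrence_parameter_real r b w u Hr (HE_b_in_01 q nu Hq Hnu))
    with (g := RtoC (HE_coef q nu 0)) (K := L * Cmod w).
  - unfold u. simpl pow. rewrite Cmult_1_l. exact Hw.
  - intros m. unfold u.
    assert (Hpow : forall n, (RtoC (r ^ S n) * w = r * (RtoC (r ^ n) * w))%C)
      by (intros n; change (r ^ S n) with (r * r ^ n); rewrite RtoC_mult; ring).
    replace (RtoC (r ^ S (S m)) * w)%C with (r * r * (RtoC (r ^ m) * w))%C
      by (rewrite !Hpow; ring).
    rewrite Hpow.
    apply CPSeries_q_difference; [apply HE_coef_entire | apply HE_coef_rec]; assumption.
  - intros Hc. injection Hc. pose proof (HE_coef_0_pos q nu Hq Hnu). lra.
  - intros n. pose proof (pow_in_01 r n ltac:(lra)) as Hrn.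
    assert (Hmod : Cmod (RtoC (r ^ n) * w) = r ^ n * Cmod w)
      by (rewrite Cmod_mult, Cmod_R, Rabs_pos_eq; lra).
    unfold u. replace (L * Cmod w * r ^ n) with (L * Cmod (RtoC (r ^ n) * w))
      by (rewrite Hmod; ring).
    apply HL. rewrite Hmod. pose proof (Cmod_ge_0 w). nra.
Qed.

End HahnExtonZeros.

Lemma cpow_real_neq_0 (x : C) (nu : R) : cpow_real x nu <> 0%C.
Proof.
  unfold cpow_real, RtoC. intros H. injection H as Hcos Hsin.
  pose proof (exp_pos (nu * ln (Cmod x))).
  assert (cos (nu * Arg x) = 0) by (apply Rmult_eq_reg_l with (exp (nu * ln (Cmod x))); lra).
  assert (sin (nu * Arg x) = 0) by (apply Rmult_eq_reg_l with (exp (nu * ln (Cmod x))); lra).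
  pose proof (sin2_cos2 (nu * Arg x)). unfold Rsqr in *. nra.
Qed.

Lemma HEJ_eq_CPSeries (q nu : R) (a : C) :
  HEJ q nu a = (cpow_real a nu * RtoC (/ qpoch_inf (q ^ 2) (q ^ 2))
                * CPSeries (HE_coef q nu) (a * a))%C.
Proof.
  unfold HEJ, CPSeries. f_equal. apply CSeries_ext. intros k. rewrite Cpown_double. reflexivity.
Qed.

Lemma HEJ_eq_0_CPSeries (q nu : R) (a : C) : 0 < q < 1 ->
  HEJ q nu a = 0%C -> CPSeries (HE_coef q nu) (a * a)%C = 0%C.
Proof.
  intros Hq Hzero. rewrite HEJ_eq_CPSeries in Hzero.
  set (f := (cpow_real a nu * RtoC (/ qpoch_inf (q ^ 2) (q ^ 2)))%C) in Hzero.
  assert (Hf : f <> 0%C).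
  { apply Cmult_neq_0; [apply cpow_real_neq_0 |]. intros E. injection E.
    pose proof (HE_r_in_01 q Hq).
    apply Rinv_neq_0_compat, Rgt_not_eq, qpoch_inf_pos; lra. }
  apply (f_equal (Cmult (/ f))) in Hzero.
  rewrite Cmult_0_r, Cmult_assoc, Cinv_l, Cmult_1_l in Hzero by exact Hf.
  exact Hzero.
Qed.

Lemma Im_sqr_eq_0 (a : C) : Im (a * a)%C = 0 -> Re a = 0 \/ Im a = 0.
Proof.
  destruct a as [x y]. simpl. intros H.
  destruct (Req_dec y 0) as [Hy | Hy]; [right; exact Hy | left; nra].
Qed.

Lemma sqr_pure_imaginary (a : C) : Re a = 0 -> (a * a)%C = RtoC (- (Im a * Im a)).
Proof. destruct a as [x y]. simpl. intros ->. unfold Cmult, RtoC. simpl. f_equal; ring. Qed.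

Theorem corollary3p2 (q nu : R) (a : C) :
  0 < q < 1 -> -1 < nu -> a <> RtoC 0 -> HEJ q nu a = RtoC 0 -> Im a = 0.
Proof.
  intros Hq Hnu _ Hzero.
  pose proof (HEJ_eq_0_CPSeries q nu a Hq Hzero) as HG.
  destruct (Im_sqr_eq_0 a (HE_series_zero_real q nu Hq Hnu _ HG)) as [Hre | Him];
    [exfalso | exact Him].
  rewrite (sqr_pure_imaginary a Hre) in HG.
  pose proof (CPSeries_Re_pos_neg _ (HE_coef_entire q nu Hq Hnu) (Im a * Im a)
                (HE_coef_0_pos q nu Hq Hnu) (HE_coef_alt_sign q nu Hq Hnu)
                ltac:(nra)) as Hpos.
  rewrite HG in Hpos. simpl in Hpos. lra.
Qed.
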